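(* There exists an SSSCG with weakly monotonic cost functions in which every PSE prescribes the leader a mixed strategy. For instance: $|F|=1$, $R=\{r_1,r_2\}$, $c_{r_1,\ell}(1)=c_{r_2,\ell}(1)=1$, $c_{r_1,\ell}(2)=c_{r_2,\ell}(2)=2$, $c_{r_1,f}(1)=c_{r_1,f}(2)=c_{r_2,f}(1)=c_{r_2,f}(2)=1$; here any pure commitment yields pessimistic leader cost $2$, while $\sigma_\ell(r_1)=\sigma_\ell(r_2)=\tfrac12$ yields $1.5$.
   Context: A symmetric Stackelberg singleton congestion game (SSSCG) consists of a leader $\ell$, a finite set $F$ of followers, a finite set $R$ of resources which every player may select (each player selects exactly one), and cost functions $c_{i,\ell},c_{i,f}:\mathbb N\to\mathbb Q$ ($i\in R$) for the leader and the followers with $c_{i,\ell}(0)=c_{i,f}(0)=0$. The leader commits to a probability distribution $\sigma_\ell$ on $R$ (pure if it puts probability $1$ on one resource). A followers' configuration is $\nu\in\mathbb N^R$ with $\sum_i\nu_i=|F|$. The followers' expected cost of resource $i$ with $x$ followers is $c^{\sigma_\ell}_{i,f}(x)=\sigma_\ell(i)c_{i,f}(x+1)+(1-\sigma_\ell(i))c_{i,f}(x)$; the leader's cost is $c_\ell^{(\sigma_\ell,\nu)}=\sum_{i\in R}\sigma_\ell(i)c_{i,\ell}(\nu_i+1)$. $\nu$ is a Nash equilibrium for $\sigma_\ell$ ($\nu\in E^{\sigma_\ell}$) if for all $i$ with $\nu_i>0$ and all $j\ne i$, $c^{\sigma_\ell}_{i,f}(\nu_i)\le c^{\sigma_\ell}_{j,f}(\nu_j+1)$.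 A PSE is a pair $(\sigma_\ell,\nu)$ such that $\sigma_\ell$ attains the minimum over all leader strategies of $\max_{\nu'\in E^{\sigma_\ell}}c_\ell^{(\sigma_\ell,\nu')}$ and $\nu\in E^{\sigma_\ell}$ attains that maximum. Weakly monotonic: $c_{i,\ell}(x)\le c_{i,\ell}(x+1)$, $c_{i,f}(x)\le c_{i,f}(x+1)$ for all $i,x$. *)

From HB Require Import structures.
From mathcomp Require Import all_boot all_order all_algebra.
Set Implicit Arguments. Unset Strict Implicit. Unset Printing Implicit Defensive.
Import Order.TTheory GRing.Theory Num.Theory.
Local Open Scope ring_scope.

(* A symmetric Stackelberg singleton congestion game: finite resource set,
   finite follower set, leader/follower cost functions N -> Q vanishing at 0. *)
Record SSSCG := {
  Res : finType;
  Fol : finType;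
  cl : Res -> nat -> rat;
  cf : Res -> nat -> rat;
  cl0 : forall i, cl i 0%N = 0;
  cf0 : forall i, cf i 0%N = 0
}.

Definition weakly_monotonic (G : SSSCG) : Prop :=
  forall (i : Res G) (x : nat),
    cl i x <= cl i x.+1 /\ cf i x <= cf i x.+1.

Section Game.
Variables (G : SSSCG) (R : realFieldType).

Definition leader_strategy (s : {ffun Res G -> R}) : Prop :=
  (forall i, 0 <= s i) /\ \sum_i s i = 1.

Definition pure (s : {ffun Res G -> R}) : Prop := exists i, s i = 1.

Definition config (nu : {ffun Res G -> nat}) : Prop :=
  (\sum_i nu i)%N = #|Fol G|.

(* followers' expected cost of resource i with x followers *)
Definition cfs (s : {ffun Res G -> R}) (i : Res G) (x : nat) : R :=
  s i * ratr (cf i x.+1) + (1 - s i) * ratr (cf i x).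

Definition lcost (s : {ffun Res G -> R}) (nu : {ffun Res G -> nat}) : R :=
  \sum_i s i * ratr (cl i (nu i).+1).

Definition NE (s : {ffun Res G -> R}) (nu : {ffun Res G -> nat}) : Prop :=
  config nu /\
  forall i j, (0 < nu i)%N -> i != j -> cfs s i (nu i) <= cfs s j (nu j).+1.

(* Pessimistic Stackelberg equilibrium: nu attains max_{nu' in E^s} lcost,
   and s minimizes (over all leader strategies s') the max over E^{s'}. *)
Definition PSE (s : {ffun Res G -> R}) (nu : {ffun Res G -> nat}) : Prop :=
  [/\ leader_strategy s, NE s nu,
      (forall nu', NE s nu' -> lcost s nu' <= lcost s nu) &
      (forall s', leader_strategy s' ->
         exists2 nu', NE s' nu' & lcost s nu <= lcost s' nu')].
End Game.

(** The follower is indifferent between the two resources whatever the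
    leader does, so every follower configuration is an equilibrium and the
    pessimistic follower sits on the resource the leader is most likely to
    use.  A leader who plays [b] with probability [s b] thus pays
    [1 + max (s true) (s false)], which is [2] for a pure strategy and is
    minimised, with value [3/2], only by the uniform strategy. *)
From HB Require Import structures.
From mathcomp Require Import all_boot all_order all_algebra.
From mathcomp Require Import zify lra.
Import Order.TTheory GRing.Theory Num.Theory.
Local Open Scope ring_scope.

Definition leader_cost_ex (i : bool) (x : nat) : rat := x%:R.
Definition follower_cost_ex (i : bool) (x : nat) : rat := (minn x 1)%:R.

Lemma leader_cost_ex0 i : leader_cost_ex i 0 = 0. Proof. by []. Qed.
Lemma follower_cost_ex0 i : follower_cost_ex i 0 = 0. Proof. by []. Qed.

Definition game_ex : SSSCG :=
  @Build_SSSCG bool unit leader_cost_ex follower_cost_ex leader_cost_ex0 follower_cost_ex0.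

Lemma game_ex_weakly_monotonic : weakly_monotonic game_ex.
Proof. by move=> i x; rewrite /= /leader_cost_ex /follower_cost_ex !ler_nat; case: x. Qed.

Definition follow (b : bool) : {ffun bool -> nat} := [ffun i => nat_of_bool (i == b)].

Section ExampleGame.
Variable R : realFieldType.
Implicit Types (s : {ffun bool -> R}) (nu : {ffun bool -> nat}).

Lemma game_ex_cfsS s i x : @cfs game_ex R s i x.+1 = 1.
Proof.
have minS1 n : minn n.+1 1 = 1%N by case: n.
by rewrite /cfs /= /follower_cost_ex !minS1 ratr_nat; lra.
Qed.

Lemma game_ex_NE_config s nu : @NE game_ex R s nu <-> @config game_ex nu.
Proof.
split=> [[] // | cfg]; split=> // i j.
by case: (nu i) => [|x] // _ _; rewrite !game_ex_cfsS.
Qed.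

Lemma game_ex_NEP s nu : @NE game_ex R s nu <-> exists b, nu = follow b.
Proof.
rewrite game_ex_NE_config /config big_bool card_unit.
split=> [nu_sum | [b ->]]; last by case: b; rewrite !ffunE.
change (nu true + nu false = 1)%N in nu_sum.
have [nuT0 | nuT_gt0] := posnP (nu true).
  exists false; apply/ffunP => -[|]; rewrite ffunE //=.
  by rewrite nuT0 in nu_sum.
exists true; apply/ffunP => -[|]; rewrite ffunE /=; lia.
Qed.

Lemma follow_NE s b : @NE game_ex R s (follow b).
Proof. by apply/game_ex_NEP; exists b. Qed.

Lemma lcost_follow s b :
  @leader_strategy game_ex R s -> @lcost game_ex R s (follow b) = 1 + s b.
Proof.
case=> _; rewrite /lcost !big_bool /= /leader_cost_ex !ffunE !ratr_nat.
by case: b => /=; lra.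
Qed.

Lemma leader_strategy_ge_half s : @leader_strategy game_ex R s -> exists b, 2^-1 <= s b.
Proof.
case=> _; rewrite big_bool /= => s_sum.
have [ge_half | lt_half] := lerP (2^-1) (s true); first by exists true.
by exists false; lra.
Qed.

Definition uniform : {ffun bool -> R} := [ffun _ => 2^-1].

Lemma uniform_leader_strategy : @leader_strategy game_ex R uniform.
Proof. by split=> [i|]; rewrite ?big_bool /= !ffunE; lra. Qed.

Lemma uniform_lcost nu : @NE game_ex R uniform nu -> @lcost game_ex R uniform nu = 3/2.
Proof.
case/game_ex_NEP => b ->; rewrite lcost_follow ?ffunE; last exact: uniform_leader_strategy.
lra.
Qed.

Lemma pessimistic_cost_ge s :
  @leader_strategy game_ex R s -> exists2 nu, @NE game_ex R s nu & 3/2 <= @lcost game_ex R s nu.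
Proof.
move=> s_strat; have [b s_b] := leader_strategy_ge_half _ s_strat.
by exists (follow b); [exact: follow_NE | rewrite lcost_follow //; lra].
Qed.

End ExampleGame.

Theorem mainTheorem15 :
  exists G : SSSCG, weakly_monotonic G /\
    forall R : realFieldType,
      (exists s nu, @PSE G R s nu) /\
      (forall s nu, @PSE G R s nu -> ~ pure s).
Proof.
exists game_ex; split; first exact: game_ex_weakly_monotonic.
move=> R; split.
  exists (uniform R), (follow true); split.
  - exact: uniform_leader_strategy.
  - exact: follow_NE.
  - by move=> nu' /uniform_lcost ->; rewrite uniform_lcost //; apply: follow_NE.
  - move=> s' /pessimistic_cost_ge [nu' NE_nu' le_nu'].
    by exists nu'; rewrite // uniform_lcost //; apply: follow_NE.
move=> s nu [s_strat _ nu_worst s_opt] [b s_b].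
have [nu' /uniform_lcost cost_nu' le_nu'] := s_opt _ (uniform_leader_strategy R).
have := nu_worst _ (follow_NE _ s b).
rewrite lcost_follow // s_b; rewrite cost_nu' in le_nu'.
lra.
Qed.
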